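(* There exists a locally finite quasi-transitive graph $G$ with infinitely many ends, chromatic number $\chi(G)=3$ and maximum degree $4$, which has a periodic proper vertex-coloring with $4$ colors but no periodic proper vertex-coloring with $3$ colors.
   Context: Locally finite: all degrees finite; quasi-transitive: finitely many $\mathrm{Aut}(G)$-orbits on $V(G)$. Ends are equivalence classes of rays, two rays being equivalent if joined by infinitely many disjoint paths. A vertex-coloring is periodic if the subgroup of color-preserving automorphisms of $G$ has finitely many orbits on $V(G)$. *)

From Stdlib Require Import List Arith.
Import ListNotations.

Section Graphs.
Variable V : Type.
Variable adj : V -> V -> Prop.

Definition simple_graph : Prop :=
  (forall x y, adj x y -> adj y x) /\ (forall x, ~ adj x x).

Fixpoint walk_from (x : V) (l : list V) : Prop :=
  match l with
  | [] => True
  | y :: l' => adj x y /\ walk_from y l'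
  end.

(* a path with vertex list x :: l (x first, last x l last) *)
Definition is_path (x : V) (l : list V) : Prop :=
  walk_from x l /\ NoDup (x :: l).

Definition connected : Prop :=
  forall u v, exists l, is_path u l /\ last l u = v.

Definition degree (v : V) (d : nat) : Prop :=
  exists l : list V, NoDup l /\ (forall w, adj v w <-> In w l) /\ length l = d.

Definition locally_finite : Prop := forall v, exists d, degree v d.

Definition max_degree (D : nat) : Prop :=
  (forall v, exists d, degree v d /\ d <= D) /\ (exists v, degree v D).

Definition is_aut (f : V -> V) : Prop :=
  (exists g : V -> V, (forall x, g (f x) = x) /\ (forall x, f (g x) = x)) /\
  (forall x y, adj x y <-> adj (f x) (f y)).

(* a subgroup of Aut(G), given by a predicate H on automorphisms, has finitely
   many orbits on V: finitely many representatives reach every vertex *)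
Definition finitely_many_orbits (H : (V -> V) -> Prop) : Prop :=
  exists reps : list V, forall v, exists s f, In s reps /\ H f /\ f s = v.

Definition quasi_transitive : Prop := finitely_many_orbits is_aut.

Definition proper_coloring (k : nat) (c : V -> nat) : Prop :=
  (forall v, c v < k) /\ (forall x y, adj x y -> c x <> c y).

Definition periodic_coloring (c : V -> nat) : Prop :=
  finitely_many_orbits (fun f => is_aut f /\ forall x, c (f x) = c x).

Definition chromatic_number (k : nat) : Prop :=
  (exists c, proper_coloring k c) /\
  (forall j, j < k -> ~ exists c, proper_coloring j c).

Definition is_ray (r : nat -> V) : Prop :=
  (forall n, adj (r n) (r (S n))) /\ (forall m n, r m = r n -> m = n).

(* two rays are equivalent if joined by infinitely many disjoint paths:
   P i is the path with vertex list (fst (P i)) :: snd (P i), starting on r1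
   and ending on r2, and distinct paths share no vertex *)
Definition path_verts (p : V * list V) : list V := fst p :: snd p.

Definition rays_equiv (r1 r2 : nat -> V) : Prop :=
  exists P : nat -> V * list V,
    (forall i, is_path (fst (P i)) (snd (P i))) /\
    (forall i, exists m, fst (P i) = r1 m) /\
    (forall i, exists n, last (snd (P i)) (fst (P i)) = r2 n) /\
    (forall i j v, i <> j -> In v (path_verts (P i)) -> ~ In v (path_verts (P j))).

Definition infinitely_many_ends : Prop :=
  forall n, exists R : nat -> nat -> V,
    (forall i, i < n -> is_ray (R i)) /\
    (forall i j, i < n -> j < n -> i <> j -> ~ rays_equiv (R i) (R j)).

End Graphs.

(* The 3-regular tree is modelled with a distinguished end: a vertex is a level
   [n : Z] together with binary digits at positions below [n], finitely many of them
   nonzero; the parent forgets the last digit and the two children append one.  The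
   maps [translate t] act transitively on this tree and respect parents and siblings.

   Each tree vertex [t] carries a gadget [T(t), X(t), Y(t), Z(t), W(t), M(t)]: the
   tree edge to the parent becomes the path [T(t) M(t) W(t) X(t) T(parent t)] (the
   spine), [X(t)] and [Y(t)] are the tips of a diamond on the edge [Z(t) W(t)], and
   [Y(t)] is joined to [X(sibling t)].  Translations lift to automorphisms, so the
   graph is quasi-transitive and colouring by gadget position is a periodic
   4-colouring.  Conversely, degrees force every automorphism to respect the spines.
   In a proper 3-colouring the diamond gives [X(t)] and [Y(t)] the same colour, so the
   [X]-vertices of two siblings are coloured differently, and a colour-preserving
   automorphism fixing [T(t)] fixes [T] of every descendant of [t].  Hence distinct
   vertices at the same depth below a common ancestor lie in distinct orbits; as there
   are arbitrarily many of them, no 3-colouring is periodic.  Finally, removing [T(c)]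
   separates the descendants of [c] from the rest of the graph, which yields
   infinitely many ends. *)

From Stdlib Require Import List Arith ZArith Lia Bool Relations.
From Stdlib Require Import FunctionalExtensionality ProofIrrelevance Classical FinFun.
Import ListNotations.

Lemma pigeonhole {B : Type} (R : nat -> B -> Prop) :
  forall n (ys : list B),
  (forall i, i < n -> exists y, In y ys /\ R i y) ->
  (forall i j y, i < n -> j < n -> R i y -> R j y -> i = j) ->
  n <= length ys.
Proof.
  induction n as [|n IH]; intros ys Hcov Hinj; [lia|].
  destruct (Hcov n (Nat.lt_succ_diag_r n)) as [y [Hy Rny]].
  destruct (in_split y ys Hy) as [ys1 [ys2 ->]].
  rewrite length_app; cbn [length].
  enough (n <= length (ys1 ++ ys2)) by (rewrite length_app in *; lia).
  apply IH; [|intros i j z Hi Hj; apply Hinj; lia].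
  intros i Hi. destruct (Hcov i (Nat.lt_lt_succ_r _ _ Hi)) as [z [Hz Riz]].
  exists z; split; [|exact Riz].
  apply in_or_app. apply in_app_or in Hz as [Hz|[<-|Hz]]; auto.
  assert (i = n) by (apply (Hinj i n y); auto). lia.
Qed.

Lemma last_cons {A : Type} (x y : A) l : last (y :: l) x = last l y.
Proof.
  revert x y; induction l as [|a l IH]; intros x y; [reflexivity|].
  change (last (a :: l) x = last (a :: l) y). rewrite !IH. reflexivity.
Qed.

Lemma last_app_cons {A : Type} (x u : A) l1 l2 : last (l1 ++ u :: l2) x = last l2 u.
Proof.
  revert x; induction l1 as [|a l1 IH]; intros x; [apply last_cons|].
  rewrite <- app_comm_cons, last_cons. apply IH.
Qed.

Section GraphFacts.
Variables (V : Type) (adj : V -> V -> Prop).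

Lemma degree_unique v d d' : degree V adj v d -> degree V adj v d' -> d = d'.
Proof.
  intros [l [Hl [Hadj <-]]] [l' [Hl' [Hadj' <-]]].
  apply Nat.le_antisymm; apply NoDup_incl_length; auto;
    intros w Hw; [apply Hadj', Hadj | apply Hadj, Hadj']; exact Hw.
Qed.

Lemma is_aut_comp f g : is_aut V adj f -> is_aut V adj g -> is_aut V adj (fun x => f (g x)).
Proof.
  intros [[f' [F1 F2]] Fa] [[g' [G1 G2]] Ga]. split.
  - exists (fun x => g' (f' x)). split; intros x; congruence.
  - intros x y. rewrite Ga, Fa. tauto.
Qed.

Lemma is_aut_inv f : is_aut V adj f ->
  exists g, is_aut V adj g /\ (forall x, g (f x) = x) /\ (forall x, f (g x) = x).
Proof.
  intros [[g [H1 H2]] Ha]. exists g. split; [|auto].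
  split; [exists f; auto|]. intros x y. rewrite (Ha (g x) (g y)), !H2. tauto.
Qed.

Lemma is_aut_degree f v d : is_aut V adj f -> degree V adj v d -> degree V adj (f v) d.
Proof.
  intros Hf [l [Hl [Hadj <-]]].
  destruct (is_aut_inv f Hf) as [g [_ [G1 G2]]].
  exists (map f l). split; [|split; [|apply length_map]].
  - apply Injective_map_NoDup; [|exact Hl]. intros a b E. congruence.
  - intros w. replace (adj (f v) w) with (adj (f v) (f (g w))) by now rewrite G2.
    rewrite <- (proj2 Hf), Hadj. split.
    + intros Hw. rewrite <- (G2 w). apply in_map, Hw.
    + intros [x [E Hx]]%in_map_iff. rewrite <- E, G1. exact Hx.
Qed.

Definition colour_aut (c : V -> nat) (f : V -> V) : Prop :=
  is_aut V adj f /\ forall x, c (f x) = c x.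

Lemma colour_aut_comp c f g : colour_aut c f -> colour_aut c g -> colour_aut c (fun x => f (g x)).
Proof.
  intros [Hf Hfc] [Hg Hgc]. split; [apply is_aut_comp; auto|]. intros x. congruence.
Qed.

Lemma colour_aut_inv c f : colour_aut c f ->
  exists g, colour_aut c g /\ forall x, g (f x) = x.
Proof.
  intros [Hf Hfc]. destruct (is_aut_inv f Hf) as [g [Hg [G1 G2]]].
  exists g. split; [split; [exact Hg|]|exact G1].
  intros x. rewrite <- (Hfc (g x)), G2. reflexivity.
Qed.

Lemma walk_from_app x l1 l2 :
  walk_from V adj x (l1 ++ l2) -> walk_from V adj (last l1 x) l2.
Proof.
  revert x; induction l1 as [|a l1 IH]; intros x H; [exact H|].
  destruct H as [_ H]. rewrite last_cons. auto.
Qed.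

Lemma path_of_walk u l : walk_from V adj u l ->
  exists l', is_path V adj u l' /\ last l' u = last l u.
Proof.
  revert u; induction l as [|y l IH]; intros u Hw.
  - exists []. split; [split; [exact I|repeat constructor; simpl; tauto]|reflexivity].
  - destruct Hw as [Huy Hw]. destruct (IH y Hw) as [l1 [[Hw1 Hn1] Hl1]].
    rewrite last_cons, <- Hl1.
    destruct (classic (In u (y :: l1))) as [Hin|Hin].
    + destruct (in_split u _ Hin) as [l2 [l3 E]].
      exists l3. rewrite <- (last_cons u y l1), E. split; [split|].
      * assert (Hwu : walk_from V adj u ((l2 ++ [u]) ++ l3)).
        { rewrite <- app_assoc; cbn [app]. rewrite <- E. split; assumption. }
        apply walk_from_app in Hwu. rewrite last_last in Hwu. exact Hwu.
      * rewrite E in Hn1. exact (NoDup_app_remove_l _ _ Hn1).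
      * symmetry. apply last_app_cons.
    + exists (y :: l1). split; [split; [split; assumption|constructor; assumption]|].
      apply last_cons.
Qed.

Lemma walk_of_clos_refl_trans u v : clos_refl_trans V adj u v ->
  exists l, walk_from V adj u l /\ last l u = v.
Proof.
  intros H. apply clos_rt_rt1n_iff in H.
  induction H as [x|x y z Hxy _ [l [Hw Hl]]]; [exists []; split; [exact I|reflexivity]|].
  exists (y :: l). split; [split; assumption|]. rewrite last_cons. exact Hl.
Qed.

Lemma connected_of_clos_refl_sym_trans :
  (forall x y, adj x y -> adj y x) ->
  (forall u v, clos_refl_sym_trans V adj u v) -> connected V adj.
Proof.
  intros Hsym Hrst u v.
  assert (Hrt : clos_refl_trans V adj u v /\ clos_refl_trans V adj v u).
  { induction (Hrst u v) as [x y Hxy|x|x y _ [IH1 IH2]|x y z _ [IH1 IH2] _ [IH3 IH4]].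
    - split; apply rt_step; auto.
    - split; apply rt_refl.
    - split; assumption.
    - split; eapply rt_trans; eassumption. }
  destruct (walk_of_clos_refl_trans u v (proj1 Hrt)) as [l [Hw Hl]].
  destruct (path_of_walk u l Hw) as [l' [Hp Hl']]. exists l'. split; congruence.
Qed.

Section Cut.
Variables (S : V -> Prop) (c : V).
Hypothesis S_leaves_through_c : forall a b, S a -> adj a b -> S b \/ b = c.

Lemma walk_leaving_passes_cut u l :
  walk_from V adj u l -> S u -> ~ S (last l u) -> In c (u :: l).
Proof.
  revert u; induction l as [|y l IH]; intros u Hw Hu Hl; [contradiction|].
  destruct Hw as [Huy Hw]. rewrite last_cons in Hl.
  destruct (S_leaves_through_c u y Hu Huy) as [Hy|<-];
    [right; apply IH|right; left; reflexivity]; assumption.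
Qed.

Lemma not_rays_equiv_of_cut r1 r2 :
  (forall n, S (r1 n)) -> (forall n, ~ S (r2 n)) -> ~ rays_equiv V adj r1 r2.
Proof.
  intros H1 H2 [P [Hpath [Hstart [Hend Hdisj]]]].
  assert (Hc : forall i, In c (path_verts V (P i))).
  { intros i. destruct (Hstart i) as [m Hm], (Hend i) as [n Hn].
    apply walk_leaving_passes_cut; [apply Hpath|rewrite Hm; apply H1|rewrite Hn; apply H2]. }
  exact (Hdisj 0 1 c ltac:(discriminate) (Hc 0) (Hc 1)).
Qed.

End Cut.

End GraphFacts.

(** * The 3-regular tree with a distinguished end *)

Open Scope Z_scope.

Definition finite_below (d : Z -> bool) : Prop := exists m, forall k, k < m -> d k = false.

Definition tree : Type :=
  { x : Z * (Z -> bool) | (forall k, fst x <= k -> snd x k = false) /\ finite_below (snd x) }.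

Definition level (t : tree) : Z := fst (proj1_sig t).
Definition digit (t : tree) : Z -> bool := snd (proj1_sig t).

Lemma tree_ext t u : level t = level u -> (forall k, digit t k = digit u k) -> t = u.
Proof.
  destruct t as [[n d] Ht], u as [[n' d'] Hu]; unfold level, digit; simpl; intros <- E.
  apply functional_extensionality in E as <-. f_equal. apply proof_irrelevance.
Qed.

Lemma digit_above t k : level t <= k -> digit t k = false.
Proof. destruct t as [[n d] [H H']]. apply H. Qed.

Lemma digit_finite_below t : finite_below (digit t).
Proof. destruct t as [[n d] [H' H]]. exact H. Qed.

Lemma finite_below_false : finite_below (fun _ => false).
Proof. exists 0; reflexivity. Qed.

Lemma finite_below_eqb i : finite_below (fun k => k =? i).
Proof. exists i. intros k Hk. apply Z.eqb_neq. lia. Qed.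

Lemma finite_below_update d a b : finite_below d ->
  finite_below (fun k => if k =? a then b else d k).
Proof.
  intros [m Hm]. exists (Z.min m a). intros k Hk.
  destruct (Z.eqb_spec k a); [lia|apply Hm; lia].
Qed.

Lemma finite_below_xorb d e : finite_below d -> finite_below e ->
  finite_below (fun k => xorb (d k) (e k)).
Proof.
  intros [m Hm] [m' Hm']. exists (Z.min m m'). intros k Hk. rewrite Hm, Hm' by lia. reflexivity.
Qed.

Lemma finite_below_shift d a : finite_below d -> finite_below (fun k => d (k + a)).
Proof. intros [m Hm]. exists (m - a). intros k Hk. apply Hm. lia. Qed.

Lemma node_wf n d : finite_below d ->
  (forall k, n <= k -> (k <? n) && d k = false) /\ finite_below (fun k => (k <? n) && d k).
Proof.
  intros [m Hm]. split.
  - intros k Hk. destruct (Z.ltb_spec k n); [lia|reflexivity].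
  - exists m. intros k Hk. rewrite Hm by lia. apply andb_false_r.
Qed.

Definition node n d (H : finite_below d) : tree :=
  exist _ (n, fun k => (k <? n) && d k) (node_wf n d H).

Lemma level_node n d H : level (node n d H) = n.
Proof. reflexivity. Qed.

Lemma digit_node n d H k : digit (node n d H) k = (k <? n) && d k.
Proof. reflexivity. Qed.

Lemma node_ext n d d' H H' : (forall k, k < n -> d k = d' k) -> node n d H = node n d' H'.
Proof.
  intros E. apply tree_ext; [reflexivity|]. intros k. rewrite !digit_node.
  destruct (Z.ltb_spec k n); [rewrite E|]; auto.
Qed.

Lemma node_digit t : node (level t) (digit t) (digit_finite_below t) = t.
Proof.
  apply tree_ext; [reflexivity|]. intros k. rewrite digit_node.
  destruct (Z.ltb_spec k (level t)); [|rewrite digit_above]; auto.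
Qed.

Definition parent t : tree := node (level t - 1) (digit t) (digit_finite_below t).

Definition child (b : bool) t : tree :=
  node (level t + 1) (fun k => if k =? level t then b else digit t k)
    (finite_below_update _ _ _ (digit_finite_below t)).

Definition sibling t : tree :=
  node (level t) (fun k => if k =? level t - 1 then negb (digit t (level t - 1)) else digit t k)
    (finite_below_update _ _ _ (digit_finite_below t)).

Definition last_digit t : bool := digit t (level t - 1).

(* [translate t] is the tree automorphism sending [root] to [t]: it shifts levels by
   [level t] and adds the digits of [t] modulo 2. *)
Definition translate t s : tree :=
  node (level t + level s) (fun k => xorb (digit s (k - level t)) (digit t k))
    (finite_below_xorb _ _ (finite_below_shift _ _ (digit_finite_below s)) (digit_finite_below t)).

Definition untranslate t s : tree :=
  node (level s - level t) (fun k => xorb (digit s (k + level t)) (digit t (k + level t)))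
    (finite_below_xorb _ _ (finite_below_shift _ _ (digit_finite_below s))
                           (finite_below_shift _ _ (digit_finite_below t))).

Definition zero_node L : tree := node L (fun _ => false) finite_below_false.

Definition root : tree := zero_node 0.

Definition onehot n i : tree := node n (fun k => k =? i) (finite_below_eqb i).

Definition branch (i : nat) : tree := onehot (Z.of_nat i + 1) (Z.of_nat i).

Ltac digit_cases :=
  unfold parent, child, sibling, translate, untranslate, root, zero_node, onehot, last_digit;
  rewrite ?digit_node, ?level_node;
  repeat match goal with
  | |- context [?a <? ?b] => destruct (Z.ltb_spec a b)
  | |- context [?a =? ?b] => destruct (Z.eqb_spec a b)
  end; cbn [andb negb xorb]; try subst;
  repeat match goal with |- context [digit ?t ?k] => rewrite (digit_above t k) by lia end;
  try reflexivity; try lia.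

Ltac tree_eq := apply tree_ext; [unfold parent, child, sibling, translate, untranslate,
  root, zero_node, onehot; rewrite ?level_node; lia | intros ?k; digit_cases].

Lemma level_parent t : level (parent t) = level t - 1.
Proof. reflexivity. Qed.

Lemma level_child b t : level (child b t) = level t + 1.
Proof. reflexivity. Qed.

Lemma parent_child b t : parent (child b t) = t.
Proof. tree_eq. Qed.

Lemma last_digit_child b t : last_digit (child b t) = b.
Proof. digit_cases. Qed.

Lemma child_parent t : t = child (last_digit t) (parent t).
Proof. tree_eq. Qed.

Lemma child_false_neq_true t : child false t <> child true t.
Proof. intros E. apply (f_equal last_digit) in E. rewrite !last_digit_child in E. discriminate. Qed.

Lemma sibling_involutive t : sibling (sibling t) = t.
Proof. tree_eq. destruct (digit t _); reflexivity. Qed.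

Lemma last_digit_sibling t : last_digit (sibling t) = negb (last_digit t).
Proof. digit_cases. Qed.

Lemma sibling_child b t : sibling (child b t) = child (negb b) t.
Proof. tree_eq. Qed.

Lemma translate_parent t s : translate t (parent s) = parent (translate t s).
Proof. tree_eq. Qed.

Lemma translate_sibling t s : translate t (sibling s) = sibling (translate t s).
Proof.
  tree_eq; replace (level t + level s - 1 - level t) with (level s - 1) by lia;
    destruct (digit s _), (digit t _); reflexivity.
Qed.

Lemma untranslate_translate t s : untranslate t (translate t s) = s.
Proof.
  tree_eq; replace (k + level t - level t) with k by lia;
    destruct (digit s k), (digit t _); reflexivity.
Qed.

Lemma translate_untranslate t s : translate t (untranslate t s) = s.
Proof.
  tree_eq; replace (k - level t + level t) with k by lia;
    destruct (digit s k), (digit t _); reflexivity.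
Qed.

Lemma translate_root t : translate t root = t.
Proof. tree_eq. Qed.

Lemma iter_parent a t :
  Nat.iter a parent t = node (level t - Z.of_nat a) (digit t) (digit_finite_below t).
Proof.
  induction a as [|a IH]; [rewrite Z.sub_0_r; symmetry; apply node_digit|].
  rewrite Nat.iter_succ, IH, Nat2Z.inj_succ. tree_eq.
Qed.

Lemma iter_parent_zero t : exists m, forall a,
  level t - Z.of_nat a <= m -> Nat.iter a parent t = zero_node (level t - Z.of_nat a).
Proof.
  destruct (digit_finite_below t) as [m Hm]. exists m. intros a Ha.
  rewrite iter_parent. apply node_ext. intros k Hk. apply Hm. lia.
Qed.

Lemma common_ancestor t u : exists a b, Nat.iter a parent t = Nat.iter b parent u.
Proof.
  destruct (iter_parent_zero t) as [m Hm], (iter_parent_zero u) as [m' Hm'].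
  set (L := Z.min (Z.min m m') (Z.min (level t) (level u))).
  exists (Z.to_nat (level t - L)), (Z.to_nat (level u - L)).
  rewrite Hm, Hm' by lia. f_equal. lia.
Qed.

Lemma iter_parent_onehot (N i : nat) :
  Nat.iter N parent (onehot (Z.of_nat N) (Z.of_nat i)) = root.
Proof.
  rewrite iter_parent. unfold onehot at 1. rewrite level_node, Z.sub_diag.
  apply node_ext. intros k Hk. digit_cases.
Qed.

Lemma onehot_inj (N i j : nat) : (i <= N)%nat -> (j <= N)%nat ->
  onehot (Z.of_nat N) (Z.of_nat i) = onehot (Z.of_nat N) (Z.of_nat j) -> i = j.
Proof.
  intros Hi Hj E. destruct (Nat.eq_dec i j) as [|Hij]; [assumption|exfalso].
  apply (f_equal (fun t => digit t (Z.of_nat (Nat.min i j)))) in E.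
  revert E; destruct (Nat.min_spec i j) as [[? ->]|[? ->]]; digit_cases; discriminate.
Qed.

Definition below c t : Prop := level c < level t /\ forall k, k < level c -> digit t k = digit c k.

Lemma below_child c t b : below c t -> below c (child b t).
Proof.
  intros [Hl Hd]. split; [rewrite level_child; lia|]. intros k Hk.
  rewrite <- Hd by exact Hk. digit_cases.
Qed.

Lemma below_child_self c b : below c (child b c).
Proof. split; [rewrite level_child; lia|]. intros k Hk. digit_cases. Qed.

Lemma below_sibling c t : below c t -> below c (sibling t).
Proof.
  intros [Hl Hd]. split; [exact Hl|]. intros k Hk.
  rewrite <- Hd by exact Hk. digit_cases.
Qed.

Lemma below_parent c t : below c t -> parent t = c \/ below c (parent t).
Proof.
  intros [Hl Hd]. destruct (Z.eq_dec (level t) (level c + 1)) as [E|E].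
  - left. tree_eq. apply Hd. lia.
  - right. split; [rewrite level_parent; lia|]. intros k Hk.
    rewrite <- Hd by exact Hk. digit_cases.
Qed.

Lemma below_branch_disjoint (i j : nat) t : below (branch i) t -> below (branch j) t -> i = j.
Proof.
  intros [_ Hi] [_ Hj]. destruct (Nat.eq_dec i j) as [|Hij]; [assumption|exfalso].
  set (k := Z.of_nat (Nat.min i j)).
  specialize (Hi k ltac:(unfold branch, onehot, k; rewrite level_node; lia)).
  specialize (Hj k ltac:(unfold branch, onehot, k; rewrite level_node; lia)).
  rewrite Hi in Hj. revert Hj. unfold branch, k.
  destruct (Nat.min_spec i j) as [[? ->]|[? ->]]; digit_cases; discriminate.
Qed.

Close Scope Z_scope.

Inductive kind := KT | KX | KY | KZ | KW | KM.

Definition vertex : Type := tree * kind.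

Definition edge (v w : vertex) : Prop :=
  let (t, K) := v in let (u, L) := w in
  match K, L with
  | KX, KZ | KZ, KX | KX, KW | KW, KX | KZ, KW | KW, KZ | KY, KZ | KZ, KY
  | KY, KW | KW, KY | KW, KM | KM, KW | KM, KT | KT, KM => u = t
  | KX, KY | KY, KX => u = sibling t
  | KT, KX => parent u = t
  | KX, KT => u = parent t
  | _, _ => False
  end.

Definition neighbours (v : vertex) : list vertex :=
  let (t, K) := v in
  match K with
  | KT => [(t, KM); (child false t, KX); (child true t, KX)]
  | KX => [(t, KZ); (t, KW); (sibling t, KY); (parent t, KT)]
  | KY => [(t, KZ); (t, KW); (sibling t, KX)]
  | KZ => [(t, KX); (t, KW); (t, KY)]
  | KW => [(t, KX); (t, KZ); (t, KY); (t, KM)]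
  | KM => [(t, KW); (t, KT)]
  end.

Ltac destruct_ors :=
  repeat match goal with
  | H : _ \/ _ |- _ => destruct H
  | H : False |- _ => destruct H
  end.

Lemma edge_neighbours v w : edge v w <-> In w (neighbours v).
Proof.
  destruct v as [t K], w as [u L]; destruct K, L; cbn; split; intros H; subst; destruct_ors;
    try (injection H; clear H; intros; subst); auto; try discriminate; try apply parent_child.
  pose proof (child_parent u) as Hu. destruct (last_digit u); rewrite <- Hu; auto.
Qed.

Lemma neighbours_nodup v : NoDup (neighbours v).
Proof.
  destruct v as [t K]; destruct K; cbn; repeat constructor; cbn; intros H; destruct_ors;
    try discriminate.
  all: apply (f_equal fst) in H; cbn in H; apply (child_false_neq_true t); congruence.
Qed.

Definition kind_degree (K : kind) : nat :=
  match K with KT => 3 | KX => 4 | KY => 3 | KZ => 3 | KW => 4 | KM => 2 end.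

Lemma degree_kind_degree v : degree vertex edge v (kind_degree (snd v)).
Proof.
  exists (neighbours v). split; [apply neighbours_nodup|]. split; [apply edge_neighbours|].
  destruct v as [t []]; reflexivity.
Qed.

Lemma edge_simple : simple_graph vertex edge.
Proof.
  split.
  - intros [t K] [u L]; destruct K, L; cbn; intros H; subst;
      rewrite ?sibling_involutive, ?parent_child; auto.
  - intros [t []]; cbn; auto.
Qed.

Lemma max_degree_4 : max_degree vertex edge 4.
Proof.
  split.
  - intros v. exists (kind_degree (snd v)). split; [apply degree_kind_degree|].
    destruct v as [t []]; cbn; lia.
  - exists (root, KX). apply (degree_kind_degree (root, KX)).
Qed.

Lemma locally_finite_graph : locally_finite vertex edge.
Proof. intros v. eexists. apply degree_kind_degree. Qed.

(** * Automorphisms and 3-colourings *)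

Lemma aut_kind_degree f v : is_aut vertex edge f ->
  kind_degree (snd (f v)) = kind_degree (snd v).
Proof.
  intros Hf. apply (degree_unique vertex edge (f v)); [apply degree_kind_degree|].
  apply is_aut_degree, degree_kind_degree. exact Hf.
Qed.

Definition has_degree2_neighbour (v : vertex) : Prop :=
  exists w, edge v w /\ kind_degree (snd w) = 2.

Lemma has_degree2_neighbour_iff v : has_degree2_neighbour v <-> snd v = KT \/ snd v = KW.
Proof.
  split.
  - intros [w [Hw Hd]]. apply edge_neighbours in Hw.
    destruct v as [t []]; cbn in Hw |- *; destruct_ors; subst; cbn in Hd;
      discriminate || auto.
  - destruct v as [t K]; cbn; intros [-> | ->]; exists (t, KM); cbn; auto.
Qed.

Lemma aut_has_degree2_neighbour f v : is_aut vertex edge f ->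
  has_degree2_neighbour v -> has_degree2_neighbour (f v).
Proof.
  intros Hf [w [Hw Hd]]. exists (f w). split; [apply (proj2 Hf v w), Hw|].
  rewrite aut_kind_degree; assumption.
Qed.

Definition spine (K : kind) : Prop := match K with KY | KZ => False | _ => True end.

(* [M] is the only kind of degree 2, [T] and [W] are the only kinds with a neighbour of
   degree 2 and differ in degree, and [X] is the only other kind of degree 4. *)
Lemma aut_kind f v : is_aut vertex edge f -> spine (snd v) -> snd (f v) = snd v.
Proof.
  intros Hf Hv. pose proof (aut_kind_degree f v Hf) as Hd.
  assert (Ht : has_degree2_neighbour (f v) <-> has_degree2_neighbour v).
  { split; [|apply aut_has_degree2_neighbour, Hf].
    destruct (is_aut_inv vertex edge f Hf) as [g [Hg [G1 _]]].
    intros H. rewrite <- (G1 v). apply aut_has_degree2_neighbour; assumption. }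
  rewrite !has_degree2_neighbour_iff in Ht.
  destruct (snd v), (snd (f v)); cbn in Hv, Hd; try discriminate; try contradiction;
    try reflexivity; exfalso; intuition discriminate.
Qed.

Definition climb (v : vertex) : vertex :=
  let (t, K) := v in
  match K with KT => (t, KM) | KM => (t, KW) | KW => (t, KX) | KX => (parent t, KT) | _ => v end.

Lemma climb_unique v w : spine (snd v) -> edge v w -> snd w = snd (climb v) -> w = climb v.
Proof.
  intros Hv Hw Hk. apply edge_neighbours in Hw.
  destruct v as [t []]; cbn in Hv, Hw, Hk |- *; try contradiction; destruct_ors; subst;
    cbn in Hk; discriminate || reflexivity.
Qed.

Lemma aut_climb f v : is_aut vertex edge f -> spine (snd v) -> f (climb v) = climb (f v).
Proof.
  intros Hf Hv. pose proof (aut_kind f v Hf Hv) as Hk.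
  apply climb_unique; [rewrite Hk; exact Hv| |].
  - apply (proj2 Hf v (climb v)).
    destruct v as [t []]; cbn in Hv |- *; try contradiction; reflexivity.
  - rewrite aut_kind by (destruct v as [t []]; cbn in Hv |- *; assumption || exact I).
    destruct v as [t K], (f (t, K)) as [t' K']; cbn in Hk |- *. subst K'.
    destruct K; reflexivity.
Qed.

Lemma aut_parent f t t' : is_aut vertex edge f -> f (t, KT) = (t', KT) ->
  f (parent t, KT) = (parent t', KT).
Proof.
  intros Hf E.
  change (parent t, KT) with (climb (climb (climb (climb (t, KT))))).
  rewrite !(aut_climb f) by (exact Hf || exact I). rewrite E. reflexivity.
Qed.

Lemma aut_iter_parent f t t' k : is_aut vertex edge f -> f (t, KT) = (t', KT) ->
  f (Nat.iter k parent t, KT) = (Nat.iter k parent t', KT).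
Proof.
  intros Hf E. induction k as [|k IH]; [exact E|].
  rewrite !Nat.iter_succ. apply aut_parent; assumption.
Qed.

(* [X(t)] and [Y(t)] both complete the triangle [Z(t) W(t)], and [Y(t)] is adjacent
   to [X(sibling t)]. *)
Lemma proper3_X_sibling_neq c t : proper_coloring vertex edge 3 c -> c (t, KX) <> c (sibling t, KX).
Proof.
  intros [Hc Hp].
  pose proof (Hp (t, KX) (t, KZ) eq_refl). pose proof (Hp (t, KX) (t, KW) eq_refl).
  pose proof (Hp (t, KZ) (t, KW) eq_refl). pose proof (Hp (t, KY) (t, KZ) eq_refl).
  pose proof (Hp (t, KY) (t, KW) eq_refl). pose proof (Hp (t, KY) (sibling t, KX) eq_refl).
  pose proof (Hc (t, KX)). pose proof (Hc (t, KY)).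
  pose proof (Hc (t, KZ)). pose proof (Hc (t, KW)).
  lia.
Qed.

Section ColourPreservingAut.
Variables (c : vertex -> nat) (f : vertex -> vertex).
Hypothesis c_proper : proper_coloring vertex edge 3 c.
Hypothesis f_colour_aut : colour_aut vertex edge c f.

Lemma colour_aut_fixes_child y b : f (y, KT) = (y, KT) -> f (child b y, KT) = (child b y, KT).
Proof.
  destruct f_colour_aut as [Hf Hfc]. intros E.
  destruct (f (child b y, KT)) as [u K] eqn:Eu.
  assert (K = KT) as ->.
  { pose proof (aut_kind f (child b y, KT) Hf I) as HK. rewrite Eu in HK. exact HK. }
  assert (EX : f (child b y, KX) = (u, KX)).
  { change (child b y, KX) with (climb (climb (climb (child b y, KT)))).
    rewrite !(aut_climb f) by (exact Hf || exact I). rewrite Eu. reflexivity. }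
  assert (Hu : parent u = y).
  { pose proof (proj1 (proj2 Hf (y, KT) (child b y, KX)) (parent_child b y)) as H.
    rewrite E, EX in H. exact H. }
  rewrite (child_parent u), Hu in EX |- *.
  destruct (Bool.bool_dec (last_digit u) b) as [->|Hb]; [reflexivity|exfalso].
  apply (proper3_X_sibling_neq c (child b y) c_proper).
  rewrite sibling_child, <- (Hfc (child b y, KX)), EX.
  replace (negb b) with (last_digit u) by (revert Hb; destruct (last_digit u), b; cbn; congruence).
  reflexivity.
Qed.

Lemma colour_aut_fixes_descendant k t :
  f (Nat.iter k parent t, KT) = (Nat.iter k parent t, KT) -> f (t, KT) = (t, KT).
Proof.
  revert t; induction k as [|k IH]; intros t E; [exact E|].
  rewrite (child_parent t). apply colour_aut_fixes_child, IH.
  rewrite <- Nat.iter_succ_r. exact E.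
Qed.

Lemma colour_aut_eq_of_common_ancestor t t' k : f (t, KT) = (t', KT) ->
  Nat.iter k parent t = Nat.iter k parent t' -> t = t'.
Proof.
  intros E Ek.
  assert (Fix : f (t, KT) = (t, KT)).
  { apply (colour_aut_fixes_descendant k). rewrite Ek at 2.
    apply aut_iter_parent; [apply f_colour_aut|exact E]. }
  rewrite Fix in E. congruence.
Qed.

End ColourPreservingAut.

Theorem no_periodic_3_colouring :
  ~ exists c, proper_coloring vertex edge 3 c /\ periodic_coloring vertex edge c.
Proof.
  intros [c [Hc [reps Hreps]]].
  set (N := length reps).
  (* The [N + 1] vertices [onehot N i], [i <= N], share the ancestor [root] at depth [N],
     so each orbit contains at most one of them. *)
  set (w i := (onehot (Z.of_nat N) (Z.of_nat i), KT)).
  enough (S N <= N) by lia.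
  apply (pigeonhole (fun i s => exists f, colour_aut vertex edge c f /\ f s = w i)).
  - intros i _. destruct (Hreps (w i)) as [s [f [Hs [Hf E]]]]. exists s. eauto.
  - intros i j s Hi Hj [f [Hf Ei]] [g [Hg Ej]].
    destruct (colour_aut_inv _ _ c f Hf) as [f' [Hf' F]].
    apply (onehot_inj N); [lia|lia|].
    apply (colour_aut_eq_of_common_ancestor c (fun x => g (f' x)) Hc
             (colour_aut_comp _ _ _ _ _ Hg Hf') _ _ N);
      [|rewrite !iter_parent_onehot; reflexivity].
    change (g (f' (w i)) = w j). rewrite <- Ei, F. exact Ej.
Qed.

Definition lift (phi : tree -> tree) (v : vertex) : vertex := (phi (fst v), snd v).

Lemma lift_is_aut phi psi : (forall x, psi (phi x) = x) -> (forall x, phi (psi x) = x) ->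
  (forall x, phi (parent x) = parent (phi x)) -> (forall x, phi (sibling x) = sibling (phi x)) ->
  is_aut vertex edge (lift phi).
Proof.
  intros H1 H2 Hp Hs. split.
  - exists (lift psi). unfold lift; split; intros [a K]; cbn; rewrite ?H1, ?H2; reflexivity.
  - assert (Hinj : forall a b, phi a = phi b -> a = b) by (intros a b E; congruence).
    intros [t K] [u L]; unfold lift; cbn. destruct K, L; cbn; split; intros E;
      subst; rewrite ?Hs, ?Hp; auto; apply Hinj; rewrite ?Hs, ?Hp; auto.
Qed.

Lemma translate_is_aut t : is_aut vertex edge (lift (translate t)).
Proof.
  apply lift_is_aut with (untranslate t);
    auto using untranslate_translate, translate_untranslate, translate_parent, translate_sibling.
Qed.

Lemma finitely_many_orbits_of_translations (H : (vertex -> vertex) -> Prop) :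
  (forall t, H (lift (translate t))) -> finitely_many_orbits vertex H.
Proof.
  intros HH. exists (map (fun K => (root, K)) [KT; KX; KY; KZ; KW; KM]). intros [t K].
  exists (root, K), (lift (translate t)). split; [destruct K; cbn; tauto|].
  split; [apply HH|]. unfold lift; cbn. rewrite translate_root. reflexivity.
Qed.

Definition kind_colour (v : vertex) : nat :=
  match snd v with KX => 0 | KY => 1 | KZ => 2 | KW => 3 | KT => 1 | KM => 0 end.

Lemma kind_colour_proper : proper_coloring vertex edge 4 kind_colour.
Proof.
  split.
  - intros [t []]; cbn; lia.
  - intros [t K] [u L]; destruct K, L; cbn; intros; discriminate || contradiction.
Qed.

Lemma kind_colour_periodic : periodic_coloring vertex edge kind_colour.
Proof.
  apply finitely_many_orbits_of_translations. intros t.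
  split; [apply translate_is_aut|]. intros [x K]. reflexivity.
Qed.

Definition last_digit_colour (v : vertex) : nat :=
  let b := if last_digit (fst v) then 1 else 0 in
  match snd v with KT | KZ => 0 | KX | KY | KM => 1 + b | KW => 2 - b end.

Lemma last_digit_colour_proper : proper_coloring vertex edge 3 last_digit_colour.
Proof.
  split.
  - intros [t K]; unfold last_digit_colour; cbn; destruct K, (last_digit t); cbn; lia.
  - intros [t K] [u L]; unfold last_digit_colour; destruct K, L; cbn; intros E;
      try contradiction; subst; rewrite ?last_digit_sibling;
      destruct (last_digit _); cbn; lia.
Qed.

Lemma chromatic_number_3 : chromatic_number vertex edge 3.
Proof.
  split; [exists last_digit_colour; apply last_digit_colour_proper|].
  intros j Hj [c [Hc Hp]].
  pose proof (Hp (root, KX) (root, KZ) eq_refl). pose proof (Hp (root, KX) (root, KW) eq_refl).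
  pose proof (Hp (root, KZ) (root, KW) eq_refl).
  pose proof (Hc (root, KX)). pose proof (Hc (root, KZ)). pose proof (Hc (root, KW)). lia.
Qed.

Definition linked : vertex -> vertex -> Prop := clos_refl_sym_trans vertex edge.

Lemma linked_T t K : linked (t, K) (t, KT).
Proof.
  assert (HW : linked (t, KW) (t, KT)).
  { apply rst_trans with (t, KM); apply rst_step; reflexivity. }
  destruct K; try apply rst_refl; try exact HW;
    (apply rst_trans with (t, KW); [apply rst_step; reflexivity|exact HW]).
Qed.

Lemma linked_iter_parent a t : linked (t, KT) (Nat.iter a parent t, KT).
Proof.
  induction a as [|a IH]; [apply rst_refl|].
  apply rst_trans with (1 := IH). rewrite Nat.iter_succ.
  apply rst_trans with (Nat.iter a parent t, KX); [apply rst_sym, linked_T|].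
  apply rst_step. reflexivity.
Qed.

Lemma connected_graph : connected vertex edge.
Proof.
  apply connected_of_clos_refl_sym_trans; [exact (proj1 edge_simple)|].
  assert (Hroot : forall v, linked v (root, KT)).
  { intros [t K]. destruct (common_ancestor t root) as [a [b E]].
    apply rst_trans with (1 := linked_T t K), rst_trans with (1 := linked_iter_parent a t).
    rewrite E. apply rst_sym, linked_iter_parent. }
  intros u v. apply rst_trans with (1 := Hroot u), rst_sym, Hroot.
Qed.

Definition descend (v : vertex) : vertex :=
  let (t, K) := v in
  match K with
  | KT => (child false t, KX) | KX => (t, KW) | KW => (t, KM) | KM => (t, KT) | _ => v
  end.

Definition height (v : vertex) : Z :=
  (4 * level (fst v) + match snd v with KX => -3 | KW => -2 | KM => -1 | _ => 0 end)%Z.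

Lemma descend_spec v : spine (snd v) ->
  spine (snd (descend v)) /\ edge v (descend v) /\ height (descend v) = (height v + 1)%Z.
Proof.
  destruct v as [t []]; cbn; intros Hv; try contradiction;
    (split; [exact I|split; [try apply parent_child; reflexivity|]]);
    unfold height; cbn [fst snd]; rewrite ?level_child; lia.
Qed.

Definition ray_from (t : tree) (n : nat) : vertex := Nat.iter n descend (t, KT).

Lemma ray_from_spec t n :
  spine (snd (ray_from t n)) /\ height (ray_from t n) = (4 * level t + Z.of_nat n)%Z.
Proof.
  induction n as [|n [IH1 IH2]].
  { split; [exact I|]. change (ray_from t 0) with (t, KT). unfold height; cbn [fst snd]. lia. }
  unfold ray_from. rewrite Nat.iter_succ. fold (ray_from t n).
  destruct (descend_spec _ IH1) as [H1 [_ H3]]. split; [exact H1|rewrite Nat2Z.inj_succ; lia].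
Qed.

Lemma ray_from_is_ray t : is_ray vertex edge (ray_from t).
Proof.
  split.
  - intros n. unfold ray_from. rewrite Nat.iter_succ. apply descend_spec, ray_from_spec.
  - intros m n E. apply (f_equal height) in E. rewrite !(proj2 (ray_from_spec t _)) in E. lia.
Qed.

Definition region c (v : vertex) : Prop := below c (fst v).

Lemma region_exit c a b : region c a -> edge a b -> region c b \/ b = (c, KT).
Proof.
  destruct a as [t K], b as [u L]; unfold region; cbn. intros Hd Hab.
  destruct K, L; cbn in Hab; try contradiction; subst; auto.
  - left. rewrite (child_parent u). apply below_child, Hd.
  - destruct (below_parent c t Hd) as [->|H]; auto.
  - left. apply below_sibling, Hd.
  - left. apply below_sibling, Hd.
Qed.

Lemma ray_from_region c t : below c t -> forall n, region c (ray_from t n).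
Proof.
  intros Hd n. induction n as [|n IH]; [exact Hd|].
  unfold ray_from in *. rewrite Nat.iter_succ. unfold region in *.
  destruct (Nat.iter n descend (t, KT)) as [u []]; cbn in *; auto using below_child.
Qed.

Lemma infinitely_many_ends_graph : infinitely_many_ends vertex edge.
Proof.
  intros n. exists (fun i => ray_from (child false (branch i))).
  split; [intros i _; apply ray_from_is_ray|].
  intros i j _ _ Hij.
  apply (not_rays_equiv_of_cut vertex edge (region (branch i)) (branch i, KT)).
  - apply region_exit.
  - apply ray_from_region, below_child_self.
  - intros m Hm. apply Hij.
    apply (below_branch_disjoint i j (fst (ray_from (child false (branch j)) m)) Hm).
    apply ray_from_region, below_child_self.
Qed.

Theorem mainTheorem19 :
  exists (V : Type) (adj : V -> V -> Prop),
    simple_graph V adj /\ connected V adj /\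
    locally_finite V adj /\ quasi_transitive V adj /\
    infinitely_many_ends V adj /\
    chromatic_number V adj 3 /\
    max_degree V adj 4 /\
    (exists c, proper_coloring V adj 4 c /\ periodic_coloring V adj c) /\
    ~ (exists c, proper_coloring V adj 3 c /\ periodic_coloring V adj c).
Proof.
  exists vertex, edge.
  split; [exact edge_simple|]. split; [exact connected_graph|].
  split; [exact locally_finite_graph|].
  split; [apply finitely_many_orbits_of_translations, translate_is_aut|].
  split; [exact infinitely_many_ends_graph|]. split; [exact chromatic_number_3|].
  split; [exact max_degree_4|]. split; [|exact no_periodic_3_colouring].
  exists kind_colour. split; [exact kind_colour_proper|exact kind_colour_periodic].
Qed.
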